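(* Let $a_n$ be the number of $n$-multisets of $[n]$ with no consecutive integers. Then \[\sum_{n\geq 1} a_n z^n \;=\; \frac{1-3z-\sqrt{1-2z-3z^2}}{6z-2}.\]
   Context: An $n$-multiset of $[n]=\{1,\dots,n\}$ is identified with the non-decreasing sequence $\pi_1\leq\pi_2\leq\cdots\leq\pi_n$ of its elements (elements may repeat). It has no consecutive integers if $\pi_{i+1}\neq\pi_i+1$ for all $i\in[n-1]$. *)

From mathcomp Require Import all_boot.

(* An n-multiset of [n] = {1,...,n} is identified with its non-decreasing
   sequence pi_1 <= ... <= pi_n of elements of [n].  We encode an element
   i : 'I_n as the integer i.+1, so values range exactly over {1,...,n}. *)
Definition multiset_seq (n : nat) (t : n.-tuple 'I_n) : seq nat :=
  map (fun i : 'I_n => (nat_of_ord i).+1) t.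

Definition is_multiset_seq (s : seq nat) : bool := sorted leq s.

Definition no_consecutive (s : seq nat) : bool :=
  sorted (fun x y => y != x.+1) s.

Definition a (n : nat) : nat :=
  #|[pred t : n.-tuple 'I_n |
      is_multiset_seq (multiset_seq n t) && no_consecutive (multiset_seq n t)]|.

From mathcomp Require Import all_boot zify ring.
Set Implicit Arguments. Unset Strict Implicit.

(* A non-decreasing sequence without consecutive values, read from the left,
   either repeats its last value or jumps up by at least 2.  Counting such
   paths gives a_(n+1) = b_n := sum_i C(n,i) C(n+1-i,i+1).  A Zeilberger
   certificate yields (n+3) b_(n+2) = 2(n+3) b_(n+1) + 3(n+1) b_n, which says
   that y = 1 + 2 z B, where B = sum_n b_n z^n, solves (1-2z-3z^2) y' = 2y.
   Then y^2 solves (1-2z-3z^2) (y^2)' = 4 y^2, so y^2 = (1+z)/(1-3z), i.e.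
   B + z B^2 = 1/(1-3z).  Solving this quadratic for z B, with the root that
   vanishes at z = 0, gives the formula. *)

Definition nc_step (x y : nat) : bool := (x <= y) && (y != x.+1).

Definition nc_paths l m x :=
  #|[pred t : l.-tuple 'I_m | path nc_step x (map (@nat_of_ord m) t)]|.

(* [nc_paths l m x] for [k] values above [x]: [i] of the [l] steps are jumps
   of size at least 2, of total size at most [k]. *)
Definition nc_count l k := \sum_(0 <= i < l.+1) 'C(l, i) * 'C(k - i, i).

Definition bterm n i := 'C(n, i) * 'C(n.+1 - i, i.+1).

Definition b n := \sum_(0 <= i < n.+1) bterm n i.

Lemma sum_bin_sub K i : \sum_(0 <= j < K) 'C(j - i, i) = 'C(K - i, i.+1).
Proof.
elim: K => [|K IH]; first by rewrite big_geq // sub0n bin0n.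
rewrite big_nat_recr //= IH.
case: (leqP i K) => h.
  by rewrite (_ : K.+1 - i = (K - i).+1) ?binS 1?addnC //; lia.
rewrite (_ : K - i = 0) 1?(_ : K.+1 - i = 0) ?bin0n; lia.
Qed.

Lemma nc_countS l k : nc_count l.+1 k = nc_count l k + \sum_(0 <= j < k.-1) nc_count l j.
Proof.
have -> : \sum_(0 <= j < k.-1) nc_count l j =
          \sum_(0 <= i < l.+1) 'C(l, i) * 'C(k - i.+1, i.+1).
  rewrite /nc_count exchange_big_nat /=; apply: eq_big_nat => i _.
  by rewrite -big_distrr /= sum_bin_sub; congr (_ * 'C(_, _)); lia.
rewrite /nc_count big_nat_recl // [X in _ = X + _]big_nat_recl //.
rewrite !bin0 !mul1n -addnA; congr (_ + _).
under eq_big_nat => i _ do rewrite binS mulnDl.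
rewrite big_split /=; congr (_ + _).
by rewrite big_nat_recr //= bin_small // mul0n addn0.
Qed.

Lemma sum_nc_step x m (F : nat -> nat) : x < m ->
  \sum_(0 <= y < m) nc_step x y * F y = F x + \sum_(x.+2 <= y < m) F y.
Proof.
move=> ltxm; rewrite (@big_cat_nat _ _ _ x) //=; last by lia.
rewrite big1_seq => [|y]; last first.
  by rewrite mem_index_iota /nc_step => /andP[_ ?]; rewrite (_ : x <= y = false) //; lia.
rewrite add0n big_ltn //= /nc_step leqnn (_ : x != x.+1) ?mul1n; last by lia.
congr (_ + _); case: (ltnP x.+1 m) => h; last by rewrite !big_geq //; lia.
rewrite big_ltn //= eqxx andbF mul0n add0n.
apply: eq_big_nat => y /andP[? ?]; rewrite (_ : x <= y) 1?(_ : y != x.+1) ?mul1n //; lia.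
Qed.

Lemma card_tuple_cons (T : finType) l (P : seq T -> bool) :
  #|[pred t : l.+1.-tuple T | P t]| = \sum_(x : T) #|[pred t : l.-tuple T | P (x :: t)]|.
Proof.
rewrite -sum1_card (reindex (fun p : T * l.-tuple T => [tuple of p.1 :: p.2])) /=.
  rewrite big_mkcond -(pair_bigA _ (fun x (t : l.-tuple T) => if P (x :: t) then 1 else 0)).
  apply: eq_bigr => x _.
  by rewrite -sum1_card [RHS]big_mkcond.
exists (fun t : l.+1.-tuple T => (thead t, [tuple of behead t])).
  by move=> [x t] _; congr pair; apply: val_inj.
by move=> t _; rewrite -tuple_eta.
Qed.

Lemma nc_pathsS l m x : nc_paths l.+1 m x = \sum_(0 <= y < m) nc_step x y * nc_paths l m y.
Proof.
rewrite /nc_paths (@card_tuple_cons _ _ (fun s => path nc_step x (map (@nat_of_ord m) s))).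
rewrite big_mkord; apply: eq_bigr => y _ /=.
case: (nc_step x y) => /=; rewrite ?mul1n ?mul0n.
  by apply: eq_card => t; rewrite !inE.
by apply: eq_card0 => t; rewrite !inE.
Qed.

Lemma nc_pathsE l m x : x < m -> nc_paths l m x = nc_count l (m.-1 - x).
Proof.
elim: l x => [|l IH] x ltxm.
  rewrite /nc_paths /nc_count big_nat1 !bin0 (eq_card (B := [pred t : 0.-tuple 'I_m | true])).
    by rewrite card_tuple.
  by move=> t; rewrite !inE tuple0.
rewrite nc_pathsS nc_countS.
under eq_big_nat => y /andP[_ ltym] do rewrite IH //.
rewrite sum_nc_step //; congr (_ + _).
rewrite -{1}(add0n x.+2) big_addn (_ : (m.-1 - x).-1 = m - x.+2); last by lia.
by rewrite big_nat_rev /=; apply: eq_big_nat => i ?; congr nc_count; lia.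
Qed.

Lemma a_succE n : a n.+1 = b n.
Proof.
have sorted_ncE (t : n.+1.-tuple 'I_n.+1) :
    is_multiset_seq (multiset_seq n.+1 t) && no_consecutive (multiset_seq n.+1 t) =
    sorted nc_step (map (@nat_of_ord n.+1) t).
  rewrite /is_multiset_seq /no_consecutive /multiset_seq -sorted_relI.
  rewrite (_ : map _ t = map succn (map (@nat_of_ord n.+1) t)) ?sorted_map;
    last by rewrite -map_comp.
  by apply: eq_sorted => u v; rewrite /= /nc_step ltnS eqSS.
rewrite /a (eq_card (B := [pred t : n.+1.-tuple 'I_n.+1 |
                              sorted nc_step (map (@nat_of_ord n.+1) t)]));
  last by move=> t; rewrite !inE sorted_ncE.
rewrite (@card_tuple_cons _ _ (fun s => sorted nc_step (map (@nat_of_ord n.+1) s))).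
rewrite -(big_mkord xpredT (nc_paths n n.+1)) /=.
under eq_big_nat => y /andP[_ ltyn] do rewrite nc_pathsE //=.
rewrite big_nat_rev /=.
rewrite (eq_big_nat _ _ (F2 := nc_count n)) => [|y /andP[_ ?]]; last by congr nc_count; lia.
rewrite /nc_count exchange_big_nat /=; apply: eq_big_nat => i _.
by rewrite -big_distrr /= sum_bin_sub.
Qed.

(* Up to the factor 2 (2m + 5 - 2i), the Zeilberger certificate of [b_rec]. *)
Definition bcert m i := if i is j.+1 then 'C(m.+1, j) * 'C(m.+1 - j, j.+1) else 0.
Arguments bcert : simpl never.

Lemma bterm_fact N i k : N = 2 * i + k ->
  bterm N i * (i`! * i.+1`! * k`!) = N`! * (N.+1 - i).
Proof.
move=> eN; apply/eqP; rewrite -(eqn_pmul2r (fact_gt0 (N - i))); apply/eqP.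
have hN := @bin_fact N i (ltac:(lia)).
have hS := @bin_fact (N.+1 - i) i.+1 (ltac:(lia)).
rewrite (_ : N.+1 - i - i.+1 = k) in hS; last by lia.
rewrite /bterm (_ : N.+1 - i = (N - i).+1) in hS *; last by lia.
rewrite (factS (N - i)) in hS.
rewrite [LHS](_ : _ = 'C(N, i) * (i`! * (N - i)`!) * ('C((N - i).+1, i.+1) * (i.+1`! * k`!)));
  last by ring.
by rewrite hN hS; ring.
Qed.

Lemma bterm_small N i : N < 2 * i -> bterm N i = 0.
Proof. by move=> ?; rewrite /bterm (@bin_small (N.+1 - i)) ?muln0 //; lia. Qed.

Lemma bcert_fact m i k : m = 2 * i + k ->
  bcert m i.+1 * (i`! * i.+1`! * k`!) = m.+1`!.
Proof.
move=> em; apply/eqP; rewrite -(eqn_pmul2r (fact_gt0 (m.+1 - i))); apply/eqP.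
have hm := @bin_fact m.+1 i (ltac:(lia)).
have hS := @bin_fact (m.+1 - i) i.+1 (ltac:(lia)).
rewrite (_ : m.+1 - i - i.+1 = k) in hS; last by lia.
rewrite /bcert [LHS](_ : _ =
  'C(m.+1, i) * (i`! * (m.+1 - i)`!) * ('C(m.+1 - i, i.+1) * (i.+1`! * k`!)));
  last by ring.
by rewrite hm hS.
Qed.

Lemma bcert_small m i : m.+2 < 2 * i -> bcert m i = 0.
Proof. by case: i => // i ?; rewrite /bcert (@bin_small (m.+1 - i)) ?muln0 //; lia. Qed.

Lemma telescope_identity m i k f : m + 2 = 2 * i + k ->
  (m + 3) * ((m + 2) * (m + 1) * f * (m + 3 - i))
    + 2 * (2 * m + 3 - 2 * i) * ((m + 1) * f * (k * (k - 1))) =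
  2 * (m + 3) * ((m + 1) * f * (m + 2 - i) * k)
    + 3 * (m + 1) * (f * (m + 1 - i) * (k * (k - 1)))
    + 2 * (2 * m + 5 - 2 * i) * ((m + 1) * f * (i * (i + 1))).
Proof.
case: k => [|[|k]] hk.
- have [j -> ->] : exists2 j, i = j.+1 & m = 2 * j by exists i.-1; lia.
  rewrite (_ : 2 * j + 3 - j.+1 = j + 2); last lia.
  rewrite (_ : 2 * (2 * j) + 5 - 2 * j.+1 = 2 * j + 3); last lia.
  ring.
- have [j -> ->] : exists2 j, i = j.+1 & m = 2 * j + 1 by exists i.-1; lia.
  rewrite (_ : 2 * j + 1 + 3 - j.+1 = j + 3); last lia.
  rewrite (_ : 2 * j + 1 + 2 - j.+1 = j + 2); last lia.
  rewrite (_ : 2 * (2 * j + 1) + 5 - 2 * j.+1 = 2 * j + 5); last lia.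
  by rewrite subnn; ring.
- have -> : m = 2 * i + k by lia.
  rewrite (_ : 2 * i + k + 3 - i = i + k + 3); last lia.
  rewrite (_ : 2 * i + k + 2 - i = i + k + 2); last lia.
  rewrite (_ : 2 * i + k + 1 - i = i + k + 1); last lia.
  rewrite (_ : 2 * (2 * i + k) + 3 - 2 * i = 2 * i + 2 * k + 3); last lia.
  rewrite (_ : 2 * (2 * i + k) + 5 - 2 * i = 2 * i + 2 * k + 5); last lia.
  rewrite (_ : k.+2 - 1 = k.+1); last lia.
  ring.
Qed.

Lemma bterm_telescope m i :
  (m + 3) * bterm (m + 2) i + 2 * (2 * m + 3 - 2 * i) * bcert m i.+1 =
  2 * (m + 3) * bterm (m + 1) i + 3 * (m + 1) * bterm m i
    + 2 * (2 * m + 5 - 2 * i) * bcert m i.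
Proof.
have [lt2i|le2i] := ltnP (m + 2) (2 * i).
  by rewrite !bterm_small ?bcert_small ?muln0 //; lia.
have [k hk] : exists k, m + 2 = 2 * i + k by exists (m + 2 - 2 * i); lia.
have Kpos : 0 < i`! * i.+1`! * k`! by rewrite !muln_gt0 !fact_gt0.
have F2 : bterm (m + 2) i * (i`! * i.+1`! * k`!) = (m + 2)`! * (m + 3 - i).
  by rewrite bterm_fact // addn3 addn2.
have F1 : bterm (m + 1) i * (i`! * i.+1`! * k`!) = (m + 1)`! * (m + 2 - i) * k.
  case: k hk {Kpos F2} => [|k] hk; first by rewrite bterm_small ?muln0 //; lia.
  rewrite [LHS](_ : _ = bterm (m + 1) i * (i`! * i.+1`! * k`!) * k.+1);
    last by rewrite !factS; ring.
  by rewrite bterm_fact ?addn2 ?addn1 //; lia.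
have F0 : bterm m i * (i`! * i.+1`! * k`!) = m`! * (m + 1 - i) * (k * (k - 1)).
  case: k hk {Kpos F2 F1} => [|[|k]] hk; try by rewrite bterm_small ?muln0 //; lia.
  rewrite [LHS](_ : _ = bterm m i * (i`! * i.+1`! * k`!) * (k.+2 * k.+1));
    last by rewrite !factS; ring.
  by rewrite bterm_fact ?addn1 ?subn1 //; lia.
have X1 : bcert m i.+1 * (i`! * i.+1`! * k`!) = (m + 1)`! * (k * (k - 1)).
  case: k hk {Kpos F2 F1 F0} => [|[|k]] hk; try by rewrite bcert_small ?muln0 //; lia.
  rewrite [LHS](_ : _ = bcert m i.+1 * (i`! * i.+1`! * k`!) * (k.+2 * k.+1));
    last by rewrite !factS; ring.
  by rewrite bcert_fact ?addn1 ?subn1 //; lia.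
have X0 : bcert m i * (i`! * i.+1`! * k`!) = (m + 1)`! * (i * (i + 1)).
  case: i hk {le2i Kpos F2 F1 F0 X1} => [|i] hk; first by rewrite !muln0.
  rewrite [LHS](_ : _ = bcert m i.+1 * (i`! * i.+1`! * k`!) * (i.+2 * i.+1));
    last by rewrite !factS; ring.
  by rewrite bcert_fact ?addn1 //; lia.
move: Kpos F2 F1 F0 X1 X0; move: (i`! * i.+1`! * k`!) => K Kpos F2 F1 F0 X1 X0.
apply/eqP; rewrite -(eqn_pmul2r Kpos); apply/eqP.
rewrite [LHS](_ : _ = (m + 3) * (bterm (m + 2) i * K)
    + 2 * (2 * m + 3 - 2 * i) * (bcert m i.+1 * K)); last by ring.
rewrite [RHS](_ : _ = 2 * (m + 3) * (bterm (m + 1) i * K) + 3 * (m + 1) * (bterm m i * K)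
    + 2 * (2 * m + 5 - 2 * i) * (bcert m i * K)); last by ring.
rewrite F2 F1 F0 X1 X0 (_ : (m + 2)`! = (m + 2) * (m + 1) * m`!);
  last by rewrite addn2 !factS; ring.
rewrite (_ : (m + 1)`! = (m + 1) * m`!); last by rewrite addn1 factS.
exact: telescope_identity.
Qed.

Lemma sum_bterm_widen m N : m < N -> \sum_(0 <= i < N) bterm m i = b m.
Proof.
elim: N => [//|N IH] ltmN; have [ltmN'|geNm] := ltnP m N; last first.
  by rewrite /b; have -> : m = N by lia.
by rewrite big_nat_recr //= IH // bterm_small ?addn0 //; lia.
Qed.

Lemma b_rec m : m.+3 * b m.+2 = 2 * m.+3 * b m.+1 + 3 * m.+1 * b m.
Proof.
have := @eq_big_nat _ 0 addn 0 m.+4 _ _ (fun i _ => bterm_telescope m i).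
rewrite !big_split /= -!big_distrr /= !sum_bterm_widen; try lia.
have -> : \sum_(0 <= i < m.+4) 2 * (2 * m + 3 - 2 * i) * bcert m i.+1 =
          \sum_(0 <= i < m.+4) 2 * (2 * m + 5 - 2 * i) * bcert m i.
  rewrite [LHS]big_nat_recr // [RHS]big_nat_recl //= (_ : bcert m 0 = 0) //.
  rewrite bcert_small ?muln0 ?addn0; last by lia.
  by apply: eq_big_nat => i _; congr (_ * _ * _); lia.
by move/eqP; rewrite eqn_add2r !addn3 addn2 !addn1 => /eqP.
Qed.

Definition selfconv (y : nat -> nat) n := \sum_(0 <= i < n.+1) y i * y (n - i).

Lemma sum_mul_selfconv (y : nat -> nat) n :
  2 * \sum_(0 <= i < n.+1) i * y i * y (n - i) = n * selfconv y n.
Proof.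
rewrite /selfconv mul2n -addnn [X in _ + X = _]big_nat_rev -big_split big_distrr /=.
apply: eq_big_nat => i /andP[_ lein]; have [d ->] : exists d, n = i + d by exists (n - i); lia.
by rewrite add0n subSS addKn addnK; ring.
Qed.

Lemma sum_mul_selfconv_pred (y : nat -> nat) n :
  2 * \sum_(0 <= i < n.+1) (i - 1) * y (i - 1) * y (n - i) = (n - 1) * selfconv y (n - 1).
Proof.
rewrite big_nat_recl // sub0n !mul0n add0n.
case: n => [|n]; first by rewrite big_geq.
by under eq_big_nat => i _ do rewrite subn1 subSS; rewrite subn1 -sum_mul_selfconv.
Qed.

(* Coefficientwise: (1-2z-3z^2) y' = 2y implies (1-2z-3z^2) (y^2)' = 4 y^2. *)
Lemma selfconv_rec (y : nat -> nat) :
  (forall n, n.+1 * y n.+1 = 2 * n.+1 * y n + 3 * (n - 1) * y (n - 1)) ->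
  forall n, n.+1 * selfconv y n.+1 = 2 * (n + 2) * selfconv y n + 3 * (n - 1) * selfconv y (n - 1).
Proof.
move=> y_rec n.
set P := \sum_(0 <= i < n.+1) i * y i * y (n - i).
set Q := \sum_(0 <= i < n.+1) (i - 1) * y (i - 1) * y (n - i).
have -> : n.+1 * selfconv y n.+1 = 4 * P + 4 * selfconv y n + 6 * Q.
  rewrite -sum_mul_selfconv big_nat_recl // !mul0n add0n.
  under eq_big_nat => i _ do rewrite subSS y_rec.
  rewrite (_ : \sum_(0 <= i < n.+1) _ = \sum_(0 <= i < n.+1)
      (2 * (i * y i * y (n - i)) + 2 * (y i * y (n - i)) + 3 * ((i - 1) * y (i - 1) * y (n - i)))).
    by rewrite big_split big_split /= -!big_distrr /= -/P -/Q -/(selfconv y n); ring.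
  by apply: eq_big_nat => i _; ring.
rewrite (_ : 4 * P + 4 * selfconv y n + 6 * Q =
             2 * (2 * P) + 4 * selfconv y n + 3 * (2 * Q)); last by ring.
by rewrite sum_mul_selfconv sum_mul_selfconv_pred; ring.
Qed.

(* The coefficients of sqrt ((1 + z) / (1 - 3z)) = 1 + 2 z B(z). *)
Definition root_coef n := if n is m.+1 then 2 * b m else 1.

Lemma root_coef_rec n :
  n.+1 * root_coef n.+1 = 2 * n.+1 * root_coef n + 3 * (n - 1) * root_coef (n - 1).
Proof.
case: n => [|[|m]] /=.
- by rewrite /b big_nat1.
- by rewrite /b big_nat_recr //= !big_nat1.
by rewrite subn1 /= mulnCA b_rec; ring.
Qed.

Lemma selfconv_root_coef n : selfconv root_coef n.+1 = 4 * 3 ^ n.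
Proof.
suff : selfconv root_coef n.+1 = 4 * 3 ^ n /\ selfconv root_coef n.+2 = 4 * 3 ^ n.+1 by case.
have rec := selfconv_rec root_coef_rec.
have s1 : selfconv root_coef 1 = 4 by have := rec 0; rewrite /selfconv big_nat1 /=; lia.
elim: n => [|n [IH1 IH2]].
  by split=> //; have := rec 1; rewrite s1 /selfconv big_nat1 /=; lia.
split=> //; apply/eqP; rewrite -(eqn_pmul2l (ltn0Sn n.+2)) rec IH1 IH2 subn1 /= !expnS; apply/eqP.
ring.
Qed.

Lemma b_conv n : b n + \sum_(0 <= k < n) b k * b (n.-1 - k) = 3 ^ n.
Proof.
apply/eqP; rewrite -(eqn_pmul2l (isT : 0 < 4)) -selfconv_root_coef; apply/eqP.
rewrite /selfconv big_nat_recl // big_nat_recr //= subnn.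
rewrite [in RHS](eq_big_nat _ _ (F2 := fun i => 4 * (b i * b (n.-1 - i)))) => [|i /andP[_ ltin]].
  by rewrite -big_distrr /=; ring.
by rewrite subSS (_ : n - i = (n.-1 - i).+1) /=; [ring | lia].
Qed.

Lemma b_le_pow3 n : b n <= 3 ^ n.
Proof. by rewrite -b_conv leq_addr. Qed.

From Stdlib Require Import Reals Lra.
From Coquelicot Require Import Coquelicot.
Open Scope R_scope.

Section ConvolutionSeries.

Variable c : nat -> R.
Hypothesis c0 : c 0%nat = 1.
Hypothesis c_bound : forall n, Rabs (c n) <= 3 ^ n.
Hypothesis c_conv : forall n, c (S n) + sum_f_R0 (fun k => c k * c (n - k)%nat) n = 3 ^ S n.

Lemma abs_term_le z n : Rabs (c n * z ^ n) <= (3 * Rabs z) ^ n.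
Proof.
rewrite Rabs_mult -RPow_abs Rpow_mult_distr.
by apply: Rmult_le_compat_r; [apply: pow_le; apply: Rabs_pos | exact: c_bound].
Qed.

Lemma ex_series_abs_term z : Rabs z < 1 / 3 -> ex_series (fun n => Rabs (c n * z ^ n)).
Proof.
move=> hz; apply: (ex_series_le _ (fun n => (3 * Rabs z) ^ n)).
  by move=> n; rewrite /norm /= /abs /= Rabs_Rabsolu; apply: abs_term_le.
by exists (/ (1 - 3 * Rabs z)); apply: is_series_geom; rewrite Rabs_right; move: (Rabs_pos z); lra.
Qed.

Lemma Series_term_abs_le z : Rabs z < 1 / 3 ->
  Rabs (Series (fun n => c n * z ^ n)) <= / (1 - 3 * Rabs z).
Proof.
move=> hz; have geo : is_series (fun n => (3 * Rabs z) ^ n) (/ (1 - 3 * Rabs z)).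
  by apply: is_series_geom; rewrite Rabs_right; move: (Rabs_pos z); lra.
apply: Rle_trans; first by apply: Series_Rabs; apply: ex_series_abs_term.
rewrite -(is_series_unique _ _ geo); apply: Series_le; last by exists (/ (1 - 3 * Rabs z)).
by move=> n; split; [apply: Rabs_pos | apply: abs_term_le].
Qed.

Lemma Series_term_quadratic z : Rabs z < 1 / 3 ->
  let B := Series (fun n => c n * z ^ n) in (B + z * B ^ 2) * (1 - 3 * z) = 1.
Proof.
move=> hz B.
have exa := ex_series_abs_term hz.
have HS : is_series (fun n => c n * z ^ n) B by apply/Series_correct/ex_series_Rabs.
have tail : is_series (fun n => c (S n) * z ^ S n) (B - 1).
  apply: (is_series_incr_1 (fun n => c n * z ^ n)).
  by rewrite /plus /= c0 /= Rmult_1_r (_ : B - 1 + 1 = B) //; ring.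
have cauchy := is_series_scal_r z _ _ (is_series_mult _ _ B B HS HS exa exa).
have geo : is_series (fun n => (3 * z) ^ S n) (/ (1 - 3 * z) - 1).
  apply: (is_series_incr_1 (fun n => (3 * z) ^ n)).
  rewrite /plus /= (_ : _ - 1 + 1 = / (1 - 3 * z)); last by ring.
  by apply: is_series_geom; rewrite Rabs_mult Rabs_right; lra.
have conv_term n : plus (c (S n) * z ^ S n)
    (sum_f_R0 (fun k => c k * z ^ k * (c (n - k)%nat * z ^ (n - k))) n * z) = (3 * z) ^ S n.
  have -> : sum_f_R0 (fun k => c k * z ^ k * (c (n - k)%nat * z ^ (n - k))) n =
            z ^ n * sum_f_R0 (fun k => c k * c (n - k)%nat) n.
    rewrite scal_sum; apply: sum_eq => k lekn.
    rewrite (_ : z ^ n = z ^ k * z ^ (n - k)); first ring.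
    by rewrite -pow_add; congr (_ ^ _); lia.
  by rewrite Rpow_mult_distr -c_conv /plus /=; ring.
have := is_series_unique _ _ (is_series_ext _ _ _ conv_term (is_series_plus _ _ _ _ tail cauchy)).
rewrite (is_series_unique _ _ geo) => quad.
have z3 : 0 < 1 - 3 * z by move: (Rle_abs z); lra.
rewrite (_ : B + z * B ^ 2 = / (1 - 3 * z)); first by field; lra.
by move: quad; rewrite /plus /=; lra.
Qed.

End ConvolutionSeries.

Lemma quadratic_root z B : 0 < 1 - 3 * z -> 0 <= 2 * (B * z) + 1 ->
  (B + z * B ^ 2) * (1 - 3 * z) = 1 ->
  B * z = (1 - 3 * z - sqrt (1 - 2 * z - 3 * z ^ 2)) / (6 * z - 2).
Proof.
move=> z3 hB quad.
have disc : 1 - 2 * z - 3 * z ^ 2 = ((2 * (B * z) + 1) * (1 - 3 * z)) ^ 2.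
  have : ((2 * (B * z) + 1) * (1 - 3 * z)) ^ 2 - (1 - 2 * z - 3 * z ^ 2) =
         4 * z * (1 - 3 * z) * ((B + z * B ^ 2) * (1 - 3 * z) - 1) by ring.
  by rewrite quad; lra.
rewrite disc sqrt_pow2; last by apply: Rmult_le_pos; lra.
by field; lra.
Qed.

Lemma INR_sum_nat (f : nat -> nat) n :
  INR (\sum_(0 <= k < n.+1) f k)%N = sum_f_R0 (fun k => INR (f k)) n.
Proof.
elim: n => [|n IH]; first by rewrite big_nat1.
by rewrite big_nat_recr //= plus_INR IH.
Qed.

Lemma INR_expn (m n : nat) : INR (expn m n) = INR m ^ n.
Proof. by elim: n => [|n IH]; rewrite ?expn0 // expnS mult_INR IH. Qed.

Lemma INR_b_bound n : Rabs (INR (b n)) <= 3 ^ n.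
Proof.
rewrite Rabs_right; last by apply/Rle_ge/pos_INR.
by rewrite (_ : 3 = INR 3) -?INR_expn; [apply/le_INR/leP/b_le_pow3 | rewrite /=; lra].
Qed.

Lemma INR_b_conv n :
  INR (b n.+1) + sum_f_R0 (fun k => INR (b k) * INR (b (n - k))) n = 3 ^ S n.
Proof.
have := f_equal INR (b_conv n.+1).
rewrite plus_INR INR_expn INR_sum_nat (_ : INR 3 = 3); last by rewrite /=; lra.
by move=> <-; congr (_ + _); apply: sum_eq => k _; rewrite mult_INR.
Qed.

Theorem theorem3 :
  exists r : R, 0 < r /\
    forall z : R, Rabs z < r ->
      is_series (fun n : nat => INR (a (S n)) * z ^ (S n))
        ((1 - 3 * z - sqrt (1 - 2 * z - 3 * z ^ 2)) / (6 * z - 2)).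
Proof.
exists (1 / 5); split=> [|z hz]; first lra.
have hz3 : Rabs z < 1 / 3 by lra.
have b0 : INR (b 0) = 1 by rewrite /b big_nat1.
set B := Series (fun n => INR (b n) * z ^ n).
have HB : is_series (fun n => INR (b n) * z ^ n) B.
  by apply/Series_correct/ex_series_Rabs/(ex_series_abs_term INR_b_bound).
(* The radius 1/5 gives |B z| <= 1/2, which selects the root with the minus sign. *)
have hBz : Rabs (B * z) <= 1 / 2.
  have := Series_term_abs_le INR_b_bound hz3; rewrite Rabs_mult -/B => hB.
  have : / (1 - 3 * Rabs z) <= 5 / 2.
    by rewrite -(Rinv_inv (5 / 2)); apply: Rinv_le_contravar; lra.
  by move: (Rabs_pos B) (Rabs_pos z); nra.
rewrite -(@quadratic_root z B); first last.
- exact: (Series_term_quadratic b0 INR_b_bound INR_b_conv hz3).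
- by case/Rabs_le_between: hBz; lra.
- by move: (Rle_abs z); lra.
apply: (is_series_ext (fun n => INR (b n) * z ^ n * z)); last exact: is_series_scal_r.
by move=> n; rewrite a_succE /=; ring.
Qed.
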